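(* Let $k<n$ be positive integers and let $\mathcal{C}\subseteq\mathbb{F}_{q^m}^n$ be an $[n,k]$ linear code with a systematic generator matrix $G=[I_k\,|\,A]$, where $A\in\mathcal{M}_{k,n-k}(\mathbb{F}_{q^m})$. Let $\mathcal{S}=\{A_{ij}:1\le i\le k,\ 1\le j\le n-k\}$. Then: (1) If $\mathcal{S}\subseteq\mathbb{F}_q$, then every $\mathbb{F}_q$-linear automorphism $\varphi$ of $\mathbb{F}_{q^m}$ satisfies $\varphi(\mathcal{C})=\mathcal{C}$; in particular $\varphi$ is linear on $\mathcal{C}$. (2) If some $\alpha\in\mathcal{S}$ is a polynomial element of $\mathbb{F}_{q^m}$ over $\mathbb{F}_q$, then an $\mathbb{F}_q$-linear automorphism $\varphi$ of $\mathbb{F}_{q^m}$ is fully linear over $\mathbb{F}_{q^m}$ if and only if $\varphi$ is linear on $\mathcal{C}$.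
   Context: $q$ is a prime power (the paper takes $q$ a power of $2$). $I_k$ is the $k\times k$ identity matrix. An element $\alpha\in\mathbb{F}_{q^m}$ is a polynomial element over $\mathbb{F}_q$ if $1,\alpha,\dots,\alpha^{m-1}$ form an $\mathbb{F}_q$-basis of $\mathbb{F}_{q^m}$. An $\mathbb{F}_q$-linear automorphism of $\mathbb{F}_{q^m}$ is a bijective $\mathbb{F}_q$-linear map $\varphi:\mathbb{F}_{q^m}\to\mathbb{F}_{q^m}$, applied componentwise to vectors, with $\varphi(\mathcal{V})=\{\varphi(\bm{v}):\bm{v}\in\mathcal{V}\}$. $\varphi$ is linear on an $\mathbb{F}_{q^m}$-linear code $\mathcal{C}$ if $\varphi(\mathcal{C})$ is an $\mathbb{F}_{q^m}$-linear subspace; $\varphi$ is fully linear over $\mathbb{F}_{q^m}$ if it is linear on every $\mathbb{F}_{q^m}$-linear code of every length. *)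

From HB Require Import structures.
From mathcomp Require Import all_boot all_order all_algebra all_field.
Set Implicit Arguments. Unset Strict Implicit. Unset Printing Implicit Defensive.
Import GRing.Theory.
Local Open Scope ring_scope.

(* F plays the role of F_q, L the role of F_{q^m} (a finite extension of F). *)

Definition Fq_lin_aut (F : fieldType) (L : fieldExtType F) (phi : L -> L) : Prop :=
  (forall (a : F) (x y : L), phi (a *: x + y) = a *: phi x + phi y) /\ bijective phi.

Definition is_Lsubspace (L : fieldType) (N : nat) (S : 'rV[L]_N -> Prop) : Prop :=
  S 0 /\ forall (a : L) (u v : 'rV[L]_N), S u -> S v -> S (a *: u + v).

Definition img_code (L : fieldType) (N : nat) (phi : L -> L) (S : 'rV[L]_N -> Prop)
  : 'rV[L]_N -> Prop :=
  fun v => exists2 w, S w & v = map_mx phi w.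

Definition linear_on (L : fieldType) (N : nat) (phi : L -> L) (S : 'rV[L]_N -> Prop) : Prop :=
  is_Lsubspace (img_code phi S).

Definition fully_linear (L : fieldType) (phi : L -> L) : Prop :=
  forall (N : nat) (S : 'rV[L]_N -> Prop), is_Lsubspace S -> linear_on phi S.

Definition polynomial_element (F : fieldType) (L : fieldExtType F) (alpha : L) : Prop :=
  basis_of fullv (mkseq (fun i => alpha ^+ i) (\dim {:L})).

Definition code_of (L : fieldType) (k N : nat) (G : 'M[L]_(k, N)) : 'rV[L]_N -> Prop :=
  fun v => (v <= G)%MS.

From HB Require Import structures.
From mathcomp Require Import all_boot all_order all_algebra all_field.
Set Implicit Arguments.
Unset Strict Implicit.
Unset Printing Implicit Defensive.
Import GRing.Theory.
Local Open Scope ring_scope.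

(* A word w lies in C iff its redundancy part is determined by its information
   part: rsubmx w = lsubmx w *m A (systematic_codeP).

   Part (1): when the entries of A are scalars from F, an F-linear map phi
   commutes with right multiplication by A, so it maps C into C; applying this
   to phi and to its (F-linear) inverse gives phi(C) = C, hence linearity.

   Part (2): call a in L a multiplier for phi when phi (a * x) = d * phi x for
   some d and all x.  Multipliers contain 1 and are closed under products and
   F-linear combinations, hence under F-spans.  If phi is linear on C, then
   scaling the image of the i-th row of G shows that every entry A i j is a
   multiplier; if some entry is a polynomial element, its powers span L, so
   every element of L is a multiplier.  Finally, when every element is a
   multiplier and phi is bijective, every scalar a is realised as the factor
   d of some multiplier, which makes phi linear on every L-linear code. *)

Definition Flinear (F : fieldType) (L : fieldExtType F) (phi : L -> L) : Prop :=
  forall (a : F) (x y : L), phi (a *: x + y) = a *: phi x + phi y.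

Definition multiplier (L : fieldType) (phi : L -> L) (a : L) : Prop :=
  exists d : L, forall x, phi (a * x) = d * phi x.

Lemma systematic_codeP (L : fieldType) (k r : nat) (A : 'M[L]_(k, r))
  (w : 'rV[L]_(k + r)) :
  code_of (row_mx 1%:M A) w <-> rsubmx w = lsubmx w *m A.
Proof.
rewrite /code_of; split.
  by case/submxP=> u ->; rewrite mul_mx_row mulmx1 row_mxKl row_mxKr.
by move=> hw; apply/submxP; exists (lsubmx w); rewrite mul_mx_row mulmx1 -hw hsubmxK.
Qed.

Lemma code_of_subspace (L : fieldType) (k N : nat) (G : 'M[L]_(k, N)) :
  is_Lsubspace (code_of G).
Proof.
split; first exact: sub0mx.
by move=> a u v hu hv; rewrite /code_of addmx_sub // scalemx_sub.
Qed.

Section FLinearMap.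

Variables (F : fieldType) (L : fieldExtType F) (phi : L -> L).
Hypothesis phi_lin : Flinear phi.

Lemma Flinear0 : phi 0 = 0.
Proof. by have := phi_lin (-1) 0 0; rewrite scaler0 addr0 scaleN1r addNr. Qed.

Lemma FlinearD x y : phi (x + y) = phi x + phi y.
Proof. by have := phi_lin 1 x y; rewrite !scale1r. Qed.

Lemma FlinearZ (a : F) x : phi (a *: x) = a *: phi x.
Proof. by have := phi_lin a x 0; rewrite !addr0 Flinear0 addr0. Qed.

Lemma map_mulmx_Fmatrix (p k r : nat) (u : 'M[L]_(p, k)) (A : 'M[L]_(k, r)) :
  (forall i j, exists c : F, A i j = c%:A) ->
  map_mx phi (u *m A) = map_mx phi u *m A.
Proof.
move=> hA; apply/matrixP=> a b; rewrite !mxE (big_morph phi FlinearD Flinear0).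
apply: eq_bigr => l _; rewrite !mxE.
by have [c ->] := hA l b; rewrite !mulr_algr FlinearZ.
Qed.

Lemma map_code_Fmatrix (k r : nat) (A : 'M[L]_(k, r)) (w : 'rV[L]_(k + r)) :
  (forall i j, exists c : F, A i j = c%:A) ->
  code_of (row_mx 1%:M A) w -> code_of (row_mx 1%:M A) (map_mx phi w).
Proof.
move=> hA /systematic_codeP hw; apply/systematic_codeP.
by rewrite -map_lsubmx -map_rsubmx hw map_mulmx_Fmatrix.
Qed.

Lemma Flinear_inverse (psi : L -> L) :
  cancel phi psi -> cancel psi phi -> Flinear psi.
Proof. by move=> phiK psiK a x y; apply: (can_inj phiK); rewrite psiK phi_lin !psiK. Qed.

Lemma multiplier1 : multiplier phi 1.
Proof. by exists 1 => x; rewrite !mul1r. Qed.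

Lemma multiplierM a b :
  multiplier phi a -> multiplier phi b -> multiplier phi (a * b).
Proof. by move=> [d hd] [e he]; exists (d * e) => x; rewrite -mulrA hd he mulrA. Qed.

Lemma multiplierX a n : multiplier phi a -> multiplier phi (a ^+ n).
Proof.
move=> ha; elim: n => [|n IHn]; first by rewrite expr0; exact: multiplier1.
by rewrite exprS; apply: multiplierM.
Qed.

Lemma multiplier0 : multiplier phi 0.
Proof. by exists 0 => x; rewrite !mul0r Flinear0. Qed.

Lemma multiplierD a b :
  multiplier phi a -> multiplier phi b -> multiplier phi (a + b).
Proof. by move=> [d hd] [e he]; exists (d + e) => x; rewrite mulrDl FlinearD hd he mulrDl. Qed.

Lemma multiplierZ (c : F) a : multiplier phi a -> multiplier phi (c *: a).
Proof. by move=> [d hd]; exists (c *: d) => x; rewrite -scalerAl FlinearZ hd scalerAl. Qed.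

(* Multipliers form an F-subspace, so they are closed under F-spans. *)
Lemma multiplier_span (X : seq L) a :
  {in X, forall b, multiplier phi b} -> a \in <<X>>%VS -> multiplier phi a.
Proof.
move=> hX; rewrite -[X]/(tval (in_tuple X)) => /coord_span ->; apply: (big_ind (multiplier phi)).
- exact: multiplier0.
- exact: multiplierD.
- by move=> i _; apply/multiplierZ/hX/mem_nth.
Qed.

(* The powers of a polynomial element span L, so one multiplier of this kind
   makes every element of L a multiplier. *)
Lemma polynomial_element_multiplier alpha :
  polynomial_element alpha -> multiplier phi alpha -> forall a, multiplier phi a.
Proof.
move=> /andP[/eqP spanX _] halpha a.
apply: (multiplier_span (X := mkseq (fun i => alpha ^+ i) (\dim {:L}))).
  by move=> _ /mapP[i _ ->]; apply: multiplierX.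
by rewrite spanX memvf.
Qed.

Section Bijective.

Variable psi : L -> L.
Hypothesis phiK : cancel phi psi.
Hypothesis psiK : cancel psi phi.

Lemma phi1_neq0 : phi 1 != 0.
Proof.
apply/eqP => phi1_0; move/eqP: (oner_neq0 L); apply.
by rewrite -[LHS]phiK phi1_0 -{1}Flinear0 phiK.
Qed.

Lemma multiplier_factor a d :
  (forall x, phi (a * x) = d * phi x) -> d = phi a / phi 1.
Proof. by move=> hd; rewrite -[a]mulr1 hd mulfK // phi1_neq0. Qed.

(* Part (2), "if": when every element is a multiplier, every scalar is a
   factor, so phi (S) is closed under L-linear combinations. *)
Lemma all_multipliers_fully_linear :
  (forall a, multiplier phi a) -> fully_linear phi.
Proof.
move=> hmul N S [S0 Slin]; split.
  by exists 0 => //; apply/matrixP=> p l; rewrite !mxE Flinear0.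
move=> a _ _ [u hu ->] [v hv ->].
pose b := psi (a * phi 1); have [d hd] := hmul b.
have db : d = a by rewrite (multiplier_factor hd) psiK mulfK // phi1_neq0.
exists (b *: u + v); first exact: Slin.
by apply/matrixP=> p l; rewrite !mxE FlinearD hd db.
Qed.

(* Scaling the image of row i of G by phi x / phi 1 yields the
   image of a codeword with information part x *: e_i, whose redundancy part
   is x *: row i A. *)
Lemma linear_on_entry_multiplier (k r : nat) (A : 'M[L]_(k, r)) i j :
  linear_on phi (code_of (row_mx 1%:M A)) -> multiplier phi (A i j).
Proof.
move=> [C0 Clin]; exists (phi (A i j) / phi 1) => x.
have p1 := phi1_neq0; set c := phi x / phi 1.
have rowG : code_of (row_mx 1%:M A) (row i (row_mx 1%:M A)) by apply: row_sub.
have [w /systematic_codeP hw] := Clin c _ _ (ex_intro2 _ _ _ rowG erefl) C0.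
rewrite addr0 row_row_mx row1 -[w]hsubmxK !map_row_mx scale_row_mx.
case/eq_row_mx => hl hr.
have wl : lsubmx w = x *: delta_mx 0 i.
  apply/matrixP=> p l; apply: (can_inj phiK).
  have := congr1 (fun M : 'rV[L]_k => M p l) hl; rewrite !mxE (ord1 p) => <-.
  by rewrite eqxx; case: eqP => _; rewrite ?mulr1 ?mulr0 ?divfK // Flinear0 mulr0.
have := congr1 (fun M : 'rV[L]_r => M 0 j) hr.
rewrite hw wl -scalemxAl -rowE !mxE [x * _]mulrC => <-.
by rewrite mulrC /c mulrA mulrAC.
Qed.

End Bijective.

End FLinearMap.

(* Part (1): an F-linear automorphism maps the code [1 | A] onto itself when
   A has entries in F; the reverse inclusion uses the inverse automorphism. *)
Lemma img_code_Fmatrix (F : fieldType) (L : fieldExtType F) (phi : L -> L)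
  (k r : nat) (A : 'M[L]_(k, r)) :
  Fq_lin_aut phi -> (forall i j, exists c : F, A i j = c%:A) ->
  forall v, img_code phi (code_of (row_mx 1%:M A)) v <-> code_of (row_mx 1%:M A) v.
Proof.
move=> [phi_lin [psi phiK psiK]] hA v.
have psi_lin := Flinear_inverse phi_lin phiK psiK.
split; first by case=> w hw ->; apply: map_code_Fmatrix.
move=> hv; exists (map_mx psi v); first exact: map_code_Fmatrix.
by apply/matrixP=> p l; rewrite !mxE psiK.
Qed.

Theorem theorem1 (F : finFieldType) (L : fieldExtType F) (k r : nat)
  (A : 'M[L]_(k, r)) :
  (0 < k)%N -> (0 < r)%N ->
  let C := code_of (row_mx 1%:M A) in
  ((forall i j, exists c : F, A i j = c%:A) ->
     forall phi : L -> L, Fq_lin_aut phi ->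
       (forall v, img_code phi C v <-> C v) /\ linear_on phi C)
  /\
  ((exists i j, polynomial_element (A i j)) ->
     forall phi : L -> L, Fq_lin_aut phi ->
       (fully_linear phi <-> linear_on phi C)).
Proof.
move=> _ _ C; split.
  move=> hA phi phi_aut.
  have img_C := img_code_Fmatrix phi_aut hA.
  have [C0 Clin] := code_of_subspace (row_mx 1%:M A).
  split=> //; split; first exact/img_C.
  by move=> a u v /img_C hu /img_C hv; apply/img_C/Clin.
move=> [i [j alpha_pol]] phi [phi_lin [psi phiK psiK]]; split.
  by move=> phi_full; apply/phi_full/code_of_subspace.
move=> phi_C; apply: (all_multipliers_fully_linear phi_lin phiK psiK) => a.
have alpha_mul := linear_on_entry_multiplier phi_lin phiK i j phi_C.
exact (polynomial_element_multiplier phi_lin alpha_pol alpha_mul a).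
Qed.
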